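(* For all nonnegative integers $x,y$, with $m=x+y$, $L=2^m$, $M=3^m$, $$H(\mathbf p^\star_{x,y})\ \ge\ \frac{m\,L}{M}\,(\log_2 3-1)\left[\left(\tfrac32\right)^{m}-\tfrac12\right].$$
   Context: Clumpy distribution: let $n_1\ge n_2\ge\dots\ge n_L$ be the list in which, for each $u=0,1,\dots,m$, the value $2^{m-u}$ appears exactly $\binom mu$ times (so $\sum_in_i=3^m=M$); let $\mathbf e_i^\star\in\{0,1\}^L$ have ones in its first $n_i$ positions and zeros elsewhere; $\mathbf p^\star_{x,y}=\frac1M\sum_{i=1}^L\mathbf e_i^\star$, a probability mass function on $[L]$. $H$ denotes Shannon entropy in bits. *)

From Stdlib Require Import Reals List.
Import ListNotations.
Open Scope R_scope.

Fixpoint binom (n k : nat) : nat :=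
  match n, k with
  | _, O => 1%nat
  | O, S _ => 0%nat
  | S n', S k' => (binom n' k' + binom n' k)%nat
  end.

(* The list (n_1,...,n_L) as a multiset: for each u = 0..m, the value
   2^(m-u) repeated binom m u times (listed in decreasing order). *)
Definition clumpy_ns (m : nat) : list nat :=
  flat_map (fun u => repeat (2 ^ (m - u))%nat (binom m u)) (seq 0 (S m)).

(* e_i^* as a 0/1 vector indexed by positions j = 0..L-1 (0-indexed):
   ones in the first n_i positions. *)
Definition e_star (ni : nat) (j : nat) : R := if Nat.ltb j ni then 1 else 0.

Definition p_star (x y : nat) (j : nat) : R :=
  let m := (x + y)%nat in
  / INR (3 ^ m) * fold_right Rplus 0 (map (fun ni => e_star ni j) (clumpy_ns m)).

Definition log2 (t : R) : R := ln t / ln 2.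

Definition entropy (L : nat) (p : nat -> R) : R :=
  - fold_right Rplus 0
      (map (fun j => if Req_EM_T (p j) 0 then 0 else p j * log2 (p j)) (seq 0 L)).

From Stdlib Require Import Reals List Lia Lra.
Open Scope R_scope.

(* Each of the [L = 2^m] vectors [e_i^*] contributes at most [1] to a bin, so every
   bin of [p^*] has mass at most [L/M].  Hence the entropy is at least the
   min-entropy bound [log2 (M/L) = m (log2 3 - 1)], which already dominates the
   right-hand side since [(L/M) ((3/2)^m - 1/2) = 1 - L/(2M) <= 1].  The counts
   [sum_i 1 = 2^m] and [sum_i n_i = 3^m] are the binomial expansions of
   [(1+1)^m] and [(1+2)^m]. *)

Definition sumR {A} (f : A -> R) (l : list A) : R := fold_right Rplus 0 (map f l).

Lemma sumR_nil {A} (f : A -> R) : sumR f nil = 0.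
Proof. reflexivity. Qed.

Lemma sumR_cons {A} (f : A -> R) a l : sumR f (a :: l) = f a + sumR f l.
Proof. reflexivity. Qed.

Lemma sumR_app {A} (f : A -> R) l1 l2 : sumR f (l1 ++ l2) = sumR f l1 + sumR f l2.
Proof.
  induction l1 as [|a l1 IH]; simpl app; rewrite ?sumR_cons, ?IH, ?sumR_nil; ring.
Qed.

Lemma sumR_flat_map {A B} (g : B -> R) (f : A -> list B) l :
  sumR g (flat_map f l) = sumR (fun a => sumR g (f a)) l.
Proof.
  induction l as [|a l IH]; simpl flat_map; [reflexivity|].
  now rewrite sumR_app, IH, sumR_cons.
Qed.

Lemma sumR_repeat {A} (f : A -> R) a k : sumR f (repeat a k) = INR k * f a.
Proof.
  induction k as [|k IH]; simpl repeat; rewrite ?sumR_cons, ?IH, ?S_INR, ?sumR_nil;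
    simpl INR; ring.
Qed.

Lemma sumR_ext_in {A} (f g : A -> R) l :
  (forall a, In a l -> f a = g a) -> sumR f l = sumR g l.
Proof.
  induction l as [|a l IH]; intro Hfg; [reflexivity|].
  rewrite !sumR_cons, Hfg, IH; [reflexivity| |left; reflexivity].
  intros b Hb; apply Hfg; right; exact Hb.
Qed.

Lemma sumR_le {A} (f g : A -> R) l : (forall a, f a <= g a) -> sumR f l <= sumR g l.
Proof.
  intro Hfg; induction l as [|a l IH]; rewrite ?sumR_cons, ?sumR_nil; [lra|].
  specialize (Hfg a); lra.
Qed.

Lemma sumR_plus {A} (f g : A -> R) l :
  sumR (fun a => f a + g a) l = sumR f l + sumR g l.
Proof. induction l as [|a l IH]; rewrite ?sumR_cons, ?IH, ?sumR_nil; ring. Qed.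

Lemma sumR_scal {A} c (f : A -> R) l : sumR (fun a => c * f a) l = c * sumR f l.
Proof. induction l as [|a l IH]; rewrite ?sumR_cons, ?IH, ?sumR_nil; ring. Qed.

Lemma sumR_swap {A B} (g : A -> B -> R) la lb :
  sumR (fun a => sumR (g a) lb) la = sumR (fun b => sumR (fun a => g a b) la) lb.
Proof.
  induction la as [|a la IH].
  - rewrite sumR_nil, (sumR_ext_in _ (fun b => 0 * 0)), sumR_scal; [ring|].
    intros; rewrite sumR_nil; ring.
  - now rewrite sumR_cons, IH, <- sumR_plus.
Qed.

Lemma sumR_seq_sum_f_R0 f n : sumR f (seq 0 (S n)) = sum_f_R0 f n.
Proof.
  induction n as [|n IH]; [cbn; ring|].
  rewrite seq_S, sumR_app, IH; cbn; ring.
Qed.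

Lemma binom_gt n k : (n < k)%nat -> binom n k = 0%nat.
Proof.
  revert k; induction n as [|n IH]; intros [|k] Hk; cbn; try lia.
  rewrite !IH by lia; reflexivity.
Qed.

Lemma C_diag n : C n n = 1.
Proof. unfold C; rewrite Nat.sub_diag; cbn; field; apply INR_fact_neq_0. Qed.

Lemma C_0 n : C n 0 = 1.
Proof. unfold C; rewrite Nat.sub_0_r; cbn; field; apply INR_fact_neq_0. Qed.

Lemma INR_binom n k : (k <= n)%nat -> INR (binom n k) = C n k.
Proof.
  revert k; induction n as [|n IH]; intros [|k] Hk; try (cbn; rewrite C_0; reflexivity).
  - lia.
  - cbn [binom]; rewrite plus_INR.
    destruct (Nat.eq_dec k n) as [->|Hkn].
    + rewrite (binom_gt n (S n)), IH, !C_diag by lia; cbn; ring.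
    + rewrite !IH by lia; apply pascal; lia.
Qed.

Lemma INR_pow_nat b m : INR (b ^ m) = INR b ^ m.
Proof. induction m as [|m IH]; cbn -[INR]; rewrite ?mult_INR, ?IH; reflexivity. Qed.

Lemma log2_le a b : 0 < a -> a <= b -> log2 a <= log2 b.
Proof.
  intros Ha Hab; unfold log2, Rdiv.
  assert (Hln2 : 0 < / ln 2) by (apply Rinv_0_lt_compat; pose proof ln_lt_2; lra).
  apply Rmult_le_compat_r; [lra|].
  destruct Hab as [Hlt| ->]; [left; now apply ln_increasing|lra].
Qed.

Lemma entropy_term_le p b :
  0 <= p <= b -> (if Req_EM_T p 0 then 0 else p * log2 p) <= p * log2 b.
Proof.
  intros Hp; destruct (Req_EM_T p 0) as [->|Hp0]; [lra|].
  apply Rmult_le_compat_l; [lra|]; apply log2_le; lra.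
Qed.

Lemma entropy_ge_neg_log2_max L (p : nat -> R) b :
  (forall j, 0 <= p j <= b) -> sumR p (seq 0 L) = 1 -> entropy L p >= - log2 b.
Proof.
  intros Hp Hsum; unfold entropy; fold (sumR (fun j =>
    if Req_EM_T (p j) 0 then 0 else p j * log2 (p j)) (seq 0 L)).
  assert (Hle : sumR (fun j => if Req_EM_T (p j) 0 then 0 else p j * log2 (p j))
                  (seq 0 L) <= sumR (fun j => log2 b * p j) (seq 0 L)).
  { apply sumR_le; intro j; rewrite (Rmult_comm (log2 b)); apply entropy_term_le, Hp. }
  rewrite sumR_scal, Hsum in Hle; lra.
Qed.

Lemma sumR_e_star n L : sumR (e_star n) (seq 0 L) = INR (Nat.min n L).
Proof.
  induction L as [|L IH]; [now rewrite Nat.min_0_r|].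
  rewrite seq_S, sumR_app, IH, Nat.add_0_l, sumR_cons, sumR_nil; unfold e_star.
  destruct (Nat.ltb_spec L n).
  - rewrite !Nat.min_r, S_INR by lia; ring.
  - rewrite !Nat.min_l by lia; ring.
Qed.

Lemma e_star_bounds n j : 0 <= e_star n j <= 1.
Proof. unfold e_star; destruct (Nat.ltb j n); lra. Qed.

Lemma column_count_bounds ns j :
  0 <= sumR (fun n => e_star n j) ns <= sumR (fun _ => 1) ns.
Proof.
  split; [rewrite <- (Rmult_0_l (sumR (fun _ => 1) ns)), <- sumR_scal|];
    apply sumR_le; intro n; pose proof (e_star_bounds n j); lra.
Qed.

Lemma sumR_column_counts ns L :
  (forall n, In n ns -> (n <= L)%nat) ->
  sumR (fun j => sumR (fun n => e_star n j) ns) (seq 0 L) = sumR INR ns.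
Proof.
  intro Hns; rewrite <- (sumR_swap e_star).
  apply sumR_ext_in; intros n Hn.
  now rewrite sumR_e_star, Nat.min_l by auto.
Qed.

Lemma sumR_clumpy_ns m (f : nat -> R) :
  sumR f (clumpy_ns m) = sum_f_R0 (fun u => C m u * f (2 ^ (m - u))%nat) m.
Proof.
  unfold clumpy_ns; rewrite sumR_flat_map, <- sumR_seq_sum_f_R0.
  apply sumR_ext_in; intros u Hu; apply in_seq in Hu.
  now rewrite sumR_repeat, INR_binom by lia.
Qed.

Lemma clumpy_ns_count m : sumR (fun _ => 1) (clumpy_ns m) = 2 ^ m.
Proof.
  rewrite sumR_clumpy_ns; replace 2 with (1 + 1) by ring; rewrite binomial.
  apply sum_eq; intros; rewrite !pow1; ring.
Qed.

Lemma clumpy_ns_sum m : sumR INR (clumpy_ns m) = 3 ^ m.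
Proof.
  rewrite sumR_clumpy_ns; replace 3 with (1 + 2) by ring; rewrite binomial.
  apply sum_eq; intros; rewrite INR_pow_nat, pow1.
  replace (INR 2) with 2 by (cbn; ring); ring.
Qed.

Lemma clumpy_ns_le m n : In n (clumpy_ns m) -> (n <= 2 ^ m)%nat.
Proof.
  unfold clumpy_ns; rewrite in_flat_map; intros (u & _ & Hn).
  apply repeat_spec in Hn as ->; apply Nat.pow_le_mono_r; lia.
Qed.

Lemma p_star_bounds x y j :
  0 <= p_star x y j <= 2 ^ (x + y) / 3 ^ (x + y).
Proof.
  unfold p_star; rewrite INR_pow_nat; replace (INR 3) with 3 by (cbn; ring).
  fold (sumR (fun n => e_star n j) (clumpy_ns (x + y))).
  pose proof (column_count_bounds (clumpy_ns (x + y)) j) as Hc.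
  rewrite clumpy_ns_count in Hc.
  assert (H3 : 0 < / 3 ^ (x + y)) by (apply Rinv_0_lt_compat, pow_lt; lra).
  unfold Rdiv; split; [apply Rmult_le_pos; lra|].
  rewrite (Rmult_comm (2 ^ _)); apply Rmult_le_compat_l; lra.
Qed.

Lemma p_star_sum x y : sumR (p_star x y) (seq 0 (2 ^ (x + y))) = 1.
Proof.
  unfold p_star; fold (sumR (fun n => e_star n 0) (clumpy_ns (x + y))).
  rewrite (sumR_ext_in _ (fun j => / INR (3 ^ (x + y)) *
             sumR (fun n => e_star n j) (clumpy_ns (x + y)))) by reflexivity.
  rewrite sumR_scal, sumR_column_counts by apply clumpy_ns_le.
  rewrite clumpy_ns_sum, INR_pow_nat; replace (INR 3) with 3 by (cbn; ring).
  field; apply pow_nonzero; lra.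
Qed.

Lemma neg_log2_pow_ratio m : - log2 (2 ^ m / 3 ^ m) = INR m * (log2 3 - 1).
Proof.
  assert (Hln2 : 0 < ln 2) by (pose proof ln_lt_2; lra).
  unfold log2, Rdiv; rewrite ln_mult, ln_Rinv, !ln_pow
    by (try apply Rinv_0_lt_compat; try apply pow_lt; lra).
  field; lra.
Qed.

Lemma log2_3_ge_1 : 1 <= log2 3.
Proof.
  replace 1 with (log2 2) by (unfold log2; field; pose proof ln_lt_2; lra).
  apply log2_le; lra.
Qed.

Lemma clumpy_rhs_le m a :
  0 <= a ->
  INR m * INR (2 ^ m) / INR (3 ^ m) * a * ((3 / 2) ^ m - 1 / 2) <= INR m * a.
Proof.
  intros Ha; rewrite !INR_pow_nat.
  replace (INR 2) with 2 by (cbn; ring); replace (INR 3) with 3 by (cbn; ring).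
  assert (H2 : 0 < 2 ^ m) by (apply pow_lt; lra).
  assert (H3 : 0 < 3 ^ m) by (apply pow_lt; lra).
  replace (3 / 2) with (3 * / 2) by reflexivity; rewrite Rpow_mult_distr, pow_inv.
  replace (INR m * 2 ^ m / 3 ^ m * a * (3 ^ m * / 2 ^ m - 1 / 2))
    with (INR m * a - INR m * a * (2 ^ m / (2 * 3 ^ m))) by (field; lra).
  assert (0 <= INR m * a * (2 ^ m / (2 * 3 ^ m))); [|lra].
  apply Rmult_le_pos; [apply Rmult_le_pos; [apply pos_INR|exact Ha]|].
  apply Rlt_le, Rdiv_lt_0_compat; lra.
Qed.

Theorem mainTheorem11 (x y : nat) :
  let m := (x + y)%nat in
  let L := (2 ^ m)%nat in
  let M := (3 ^ m)%nat in
  entropy L (p_star x y) >=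
    INR m * INR L / INR M * (log2 3 - 1) * ((3 / 2) ^ m - 1 / 2).
Proof.
  intros m L M.
  assert (Hent := entropy_ge_neg_log2_max L (p_star x y) _ (p_star_bounds x y)
                    (p_star_sum x y)).
  rewrite neg_log2_pow_ratio in Hent.
  assert (Hrhs : 0 <= log2 3 - 1) by (pose proof log2_3_ge_1; lra).
  apply (clumpy_rhs_le m) in Hrhs.
  fold m L M in Hent, Hrhs; lra.
Qed.
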